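(* Let $T\in(\mathbb{C}^n)^{\otimes3}$ be an $r$-diagonalisable symmetric tensor with slices $T_1,\dots,T_n$, and let $T^{(a)}=\sum_{i=1}^na_iT_i$ be a linear combination of the slices of rank $r$ such that $\kappa_F(T^{(a)})<k_F$ (with $k_F>0$). Let $\tilde A=2k_FT^{(a)}(T^{(a)})^*$ and let $\sigma_1\ge\dots\ge\sigma_r$ be its $r$ nonzero eigenvalues. Then $\sigma_r\ge 2/r$.
   Context: $T$ is $r$-diagonalisable if $T=\sum_{i=1}^ru_i^{\otimes3}$ with $u_1,\dots,u_r\in\mathbb{C}^n$ linearly independent. The $k$-th slice of $T$ is $T_k=(T_{ijk})_{i,j}$. For a matrix $M$, $\kappa_F(M)=\|M\|_F^2+\|M^\dagger\|_F^2$ with $M^\dagger$ the Moore–Penrose pseudoinverse. *)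

From HB Require Import structures.
From Stdlib Require Import ClassicalEpsilon.
From mathcomp Require Import all_boot all_order all_algebra.
Set Implicit Arguments. Unset Strict Implicit. Unset Printing Implicit Defensive.
Import Order.TTheory GRing.Theory Num.Theory.
Local Open Scope ring_scope.

(* The complex field is modelled by an arbitrary numClosedFieldType C
   (algebraically closed field with conjugation x^* and norm |.|). *)

Definition tensor3 (C : Type) (n : nat) := 'I_n -> 'I_n -> 'I_n -> C.

(* T is r-diagonalisable: T = sum_{l<r} u_l^{⊗3}, with u_1..u_r linearly
   independent (the rows of U : 'M_(r,n), i.e. row_free U). *)
Definition r_diagonalisable (C : numClosedFieldType) (n r : nat) (T : tensor3 C n) :=
  exists U : 'M[C]_(r, n), row_free U /\
    forall i j k, T i j k = \sum_(l < r) U l i * U l j * U l k.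

Definition slice (C : Type) (n : nat) (T : tensor3 C n) (k : 'I_n) : 'M[C]_n :=
  \matrix_(i, j) T i j k.

Definition adjmx (C : numClosedFieldType) (m p : nat) (M : 'M[C]_(m, p)) : 'M[C]_(p, m) :=
  (map_mx (fun x => x^*) M)^T.

Definition frob2 (C : numClosedFieldType) (m p : nat) (M : 'M[C]_(m, p)) : C :=
  \sum_(i < m) \sum_(j < p) `|M i j| ^+ 2.

Definition is_pinv (C : numClosedFieldType) (m p : nat) (M : 'M[C]_(m, p)) (X : 'M[C]_(p, m)) :=
  [/\ M *m X *m M = M, X *m M *m X = X,
      adjmx (M *m X) = M *m X & adjmx (X *m M) = X *m M].

(* Moore–Penrose pseudoinverse (the unique solution of the Penrose equations) *)
Definition pinv (C : numClosedFieldType) (m p : nat) (M : 'M[C]_(m, p)) : 'M[C]_(p, m) :=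
  epsilon (inhabits 0) (is_pinv M).

Definition kappaF (C : numClosedFieldType) (m p : nat) (M : 'M[C]_(m, p)) : C :=
  frob2 M + frob2 (pinv M).

Definition slicecomb (C : numClosedFieldType) (n : nat) (T : tensor3 C n) (a : 'I_n -> C) : 'M[C]_n :=
  \sum_(k < n) a k *: slice T k.

From HB Require Import structures.
From Stdlib Require Import ClassicalEpsilon.
From mathcomp Require Import all_boot all_order all_algebra ring.
Import Order.TTheory GRing.Theory Num.Theory.
Local Open Scope ring_scope.
Set Implicit Arguments. Unset Strict Implicit.

(* Let M = T^(a) and let lam != 0 be an eigenvalue of M M^*, with left
   eigenvector v.  Then w = v M satisfies |w|^2 = lam |v|^2 and, by the Penrose
   equations, v = w M^+; Cauchy-Schwarz gives |v|^2 <= |w|^2 |M^+|_F^2, whence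
   lam |M^+|_F^2 >= 1.  As |M^+|_F^2 <= kappa_F(M) < k_F, every nonzero
   eigenvalue 2 k_F lam of A~ is at least 2 >= 2/r. *)

Lemma CauchySchwarz_real (R : numDomainType) (I : finType) (p q : I -> R) :
    (forall i, p i \is Num.real) -> (forall i, q i \is Num.real) ->
  (\sum_i p i * q i) ^+ 2 <= (\sum_i p i ^+ 2) * (\sum_i q i ^+ 2).
Proof.
move=> p_real q_real.
pose D i j := p i ^+ 2 * q j ^+ 2 - p i * q i * (p j * q j).
have sumD : \sum_i \sum_j D i j = (\sum_i p i ^+ 2) * (\sum_i q i ^+ 2) - (\sum_i p i * q i) ^+ 2.
  by rewrite expr2 !big_distrlr -sumrB; apply: eq_bigr => i _; rewrite -sumrB.
have lagrange : \sum_i \sum_j (p i * q j - p j * q i) ^+ 2 = 2 * \sum_i \sum_j D i j.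
  rewrite mulr2n mulrDl mul1r [in X in _ + X]exchange_big -big_split /=.
  by apply: eq_bigr => i _; rewrite -big_split; apply: eq_bigr => j _; rewrite /D /=; ring.
rewrite -subr_ge0 -sumD -(pmulr_rge0 _ (ltr0n R 2)) -lagrange.
apply: sumr_ge0 => i _; apply: sumr_ge0 => j _; apply: real_exprn_even_ge0 => //.
by rewrite rpredB // rpredM.
Qed.

Lemma CauchySchwarz_norm (R : numDomainType) (I : finType) (a b : I -> R) :
  `|\sum_i a i * b i| ^+ 2 <= (\sum_i `|a i| ^+ 2) * (\sum_i `|b i| ^+ 2).
Proof.
apply: le_trans (CauchySchwarz_real (fun i => normr_real (a i)) (fun i => normr_real (b i))).
rewrite lerXn2r ?nnegrE //; first by apply: sumr_ge0 => i _; rewrite mulr_ge0.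
by apply: le_trans (ler_norm_sum _ _ _) _; apply: ler_sum => i _; rewrite normrM.
Qed.

Section ComplexMatrices.
Variable C : numClosedFieldType.
Implicit Types (m n p : nat).

Lemma adjmxK m n (A : 'M[C]_(m, n)) : adjmx (adjmx A) = A.
Proof. by apply/matrixP => i j; rewrite !mxE conjCK. Qed.

Lemma adjmxM m n p (A : 'M[C]_(m, n)) (B : 'M[C]_(n, p)) :
  adjmx (A *m B) = adjmx B *m adjmx A.
Proof. by rewrite /adjmx (map_mxM (@Num.conj C)) trmx_mul. Qed.

Lemma adjmx_invmx n (A : 'M[C]_n) : adjmx (invmx A) = invmx (adjmx A).
Proof. by rewrite /adjmx (map_invmx (@Num.conj C)) trmx_inv. Qed.

Lemma mxrank_adjmx m n (A : 'M[C]_(m, n)) : \rank (adjmx A) = \rank A.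
Proof. by rewrite /adjmx mxrank_tr (mxrank_map (@Num.conj C)). Qed.

Lemma frob2_ge0 m n (A : 'M[C]_(m, n)) : 0 <= frob2 A.
Proof. by apply: sumr_ge0 => i _; apply: sumr_ge0 => j _; apply: exprn_ge0. Qed.

Lemma frob2_eq0 m n (A : 'M[C]_(m, n)) : (frob2 A == 0) = (A == 0).
Proof.
apply/eqP/eqP => [A0|->]; last first.
  by apply: big1 => i _; apply: big1 => j _; rewrite mxE normr0 expr0n.
have row0 i : \sum_j `|A i j| ^+ 2 = 0.
  by move: A0 => /psumr_eq0P; apply=> // i' _; apply: sumr_ge0 => j _; apply: exprn_ge0.
apply/matrixP => i j; rewrite mxE; apply/eqP; rewrite -normr_eq0 -sqrf_eq0.
by apply/eqP; move: (row0 i) => /psumr_eq0P; apply=> // j' _; apply: exprn_ge0.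
Qed.

Lemma frob2_gt0 m n (A : 'M[C]_(m, n)) : A != 0 -> 0 < frob2 A.
Proof. by rewrite lt_def frob2_ge0 frob2_eq0 andbT. Qed.

Lemma mxtrace_mul_adjmx m n (A : 'M[C]_(m, n)) : \tr (A *m adjmx A) = frob2 A.
Proof.
apply: eq_bigr => i _; rewrite mxE; apply: eq_bigr => j _.
by rewrite !mxE normCK.
Qed.

Lemma frob2_mulmx_le m n p (A : 'M[C]_(m, n)) (B : 'M[C]_(n, p)) :
  frob2 (A *m B) <= frob2 A * frob2 B.
Proof.
rewrite /frob2 [X in _ * X]exchange_big mulr_suml; apply: ler_sum => i _.
rewrite mulr_sumr; apply: ler_sum => j _; rewrite mxE.
exact: CauchySchwarz_norm.
Qed.

Lemma unitmx_mul_adjmx m n (A : 'M[C]_(m, n)) : row_free A -> A *m adjmx A \in unitmx.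
Proof.
move=> freeA; rewrite -row_free_unit; apply: inj_row_free => v vAA0.
have : frob2 (v *m A) = 0.
  by rewrite -mxtrace_mul_adjmx adjmxM mulmxA -(mulmxA v) vAA0 mul0mx mxtrace0.
by move/eqP; rewrite frob2_eq0 mulmx_free_eq0 // => /eqP.
Qed.

Lemma is_pinv_full_rank_factor m n k (B : 'M[C]_(m, k)) (D : 'M[C]_(k, n)) :
    row_full B -> row_free D ->
  let GB := adjmx B *m B in let GD := D *m adjmx D in
  is_pinv (B *m D) (adjmx D *m invmx GD *m invmx GB *m adjmx B).
Proof.
move=> fullB freeD GB GD.
have GB_unit : GB \in unitmx.
  by rewrite /GB -[X in _ *m X]adjmxK unitmx_mul_adjmx // /row_free mxrank_adjmx.
have GD_unit : GD \in unitmx by exact: unitmx_mul_adjmx.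
have GB_herm : adjmx (invmx GB) = invmx GB by rewrite adjmx_invmx /GB adjmxM adjmxK.
have GD_herm : adjmx (invmx GD) = invmx GD by rewrite adjmx_invmx /GD adjmxM adjmxK.
set X := adjmx D *m _ *m _ *m _.
have MX : B *m D *m X = B *m invmx GB *m adjmx B.
  by rewrite !mulmxA -(mulmxA B) -/GD -(mulmxA B GD) mulmxV // mulmx1.
have XM : X *m (B *m D) = adjmx D *m invmx GD *m D.
  by rewrite !mulmxA -(mulmxA _ (adjmx B)) -/GB -(mulmxA _ (invmx GB)) mulVmx // mulmx1.
split.
- by rewrite MX !mulmxA -(mulmxA _ (adjmx B)) -/GB -(mulmxA _ (invmx GB)) mulVmx // mulmx1.
- by rewrite XM !mulmxA -(mulmxA _ D) -/GD -(mulmxA _ (invmx GD) GD) mulVmx // mulmx1.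
- by rewrite MX !adjmxM adjmxK GB_herm mulmxA.
- by rewrite XM !adjmxM adjmxK GD_herm mulmxA.
Qed.

Lemma pinvP m n (A : 'M[C]_(m, n)) : is_pinv A (pinv A).
Proof.
apply: epsilon_spec; rewrite -(mulmx_base A).
by eexists; apply: is_pinv_full_rank_factor; [exact: col_base_full | exact: row_base_free].
Qed.

Lemma eigenvalue_scalemx n (A : 'M[C]_n) c a :
  c != 0 -> eigenvalue (c *: A) a -> eigenvalue A (a / c).
Proof.
move=> c_neq0 /eigenvalueP [v vcA v_neq0]; apply/eigenvalueP; exists v => //.
by rewrite -[A](scalerK c_neq0) -scalemxAr vcA scalerA mulrC.
Qed.

Lemma eigenvalue_mul_adjmx_frob2_ge1 m n (M : 'M[C]_(m, n)) (X : 'M[C]_(n, m)) lam :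
    M *m X *m M = M -> adjmx (M *m X) = M *m X ->
  eigenvalue (M *m adjmx M) lam -> lam != 0 -> 1 <= lam * frob2 X.
Proof.
move=> MXM MX_herm /eigenvalueP [v v_eig v_neq0] lam_neq0.
set w := v *m M.
have v_def : v = lam^-1 *: (w *m adjmx M).
  by rewrite /w -mulmxA v_eig scalerA mulVf // scale1r.
have wX : w *m X = v.
  rewrite /w -mulmxA {1}v_def -scalemxAl -mulmxA -MX_herm -adjmxM MXM.
  by rewrite -v_def.
have frob2_w : frob2 w = lam * frob2 v.
  by rewrite -!mxtrace_mul_adjmx adjmxM mulmxA -(mulmxA v) v_eig -scalemxAl mxtraceZ.
have : frob2 v * 1 <= frob2 v * (lam * frob2 X).
  by rewrite mulr1 mulrA [_ * lam]mulrC -frob2_w -{1}wX frob2_mulmx_le.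
by rewrite ler_pM2l // frob2_gt0.
Qed.

End ComplexMatrices.
Unset Implicit Arguments.

Theorem lemma4p15 (C : numClosedFieldType) (n r : nat) (T : tensor3 C n)
  (a : 'I_n -> C) (kF : C) :
  r_diagonalisable r T ->
  \rank (slicecomb T a) = r ->
  0 < kF ->
  kappaF (slicecomb T a) < kF ->
  forall sigma : C,
    eigenvalue ((2 * kF) *: (slicecomb T a *m adjmx (slicecomb T a))) sigma ->
    sigma != 0 ->
    2 / r%:R <= sigma.
Proof.
move=> _ _ kF_gt0 kappa_lt sigma sigma_eig sigma_neq0.
set M := slicecomb T a in kappa_lt sigma_eig.
have c_gt0 : 0 < 2 * kF by rewrite mulr_gt0.
set lam := sigma / (2 * kF).
have lam_neq0 : lam != 0 by rewrite mulf_neq0 // invr_eq0 lt0r_neq0.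
have [MXM _ MX_herm _] := pinvP M.
have lam_frob2 : 1 <= lam * frob2 (pinv M).
  apply: eigenvalue_mul_adjmx_frob2_ge1 MXM MX_herm _ lam_neq0.
  exact: eigenvalue_scalemx (lt0r_neq0 c_gt0) sigma_eig.
have frob2_pinv : frob2 (pinv M) <= kF.
  by apply: le_trans (ltW kappa_lt); rewrite lerDr frob2_ge0.
have frob2_pinv_gt0 : 0 < frob2 (pinv M).
  by rewrite lt_def frob2_ge0 andbT; apply: contraTneq lam_frob2 => ->; rewrite mulr0 ler10.
have lam_gt0 : 0 < lam.
  by rewrite -(pmulr_lgt0 _ frob2_pinv_gt0) (lt_le_trans ltr01 lam_frob2).
have sigma_ge2 : 2 <= sigma.
  rewrite -[sigma](divfK (lt0r_neq0 c_gt0)) -/lam mulrCA -[X in X <= _]mulr1 ler_pM2l //.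
  by apply: le_trans lam_frob2 _; rewrite ler_pM2l.
apply: le_trans sigma_ge2; apply: ler_piMr => //.
by case: r => [|r]; rewrite ?invr0 // invf_le1 ?ler1n.
Qed.
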